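(* Let $L:G\to[0,\infty)$ be proper. (1) If $G$ has polynomial H-growth with respect to $L$, then there exists $s>0$ such that for every normalized 2-cocycle $\sigma$ and every $x\in C^*_r(G,\sigma)$ with $\sum_{g\in G}|\widehat x(g)|^2(1+L(g))^s<\infty$, the Fourier series of $x$ converges to $x$ in operator norm. (2) If $G$ has subexponential H-growth with respect to $L$, then for every normalized 2-cocycle $\sigma$ and every $x\in C^*_r(G,\sigma)$ such that $\sum_{g\in G}|\widehat x(g)|^2\exp(tL(g))<\infty$ for some $t>0$, the Fourier series of $x$ converges to $x$ in operator norm.
   Context: $G$ is a countable discrete group with identity $e$; $\sigma:G\times G\to\mathbb{T}$ is a normalized 2-cocycle ($\sigma(g,h)\sigma(gh,k)=\sigma(h,k)\sigma(g,hk)$, $\sigma(g,e)=\sigma(e,g)=1$); $\Lambda_\sigma(g)$ is the unitary on $\ell^2(G)$ with $(\Lambda_\sigma(g)\xi)(h)=\sigma(g,g^{-1}h)\xi(g^{-1}h)$; $\lambda=\Lambda_1$. $C^*_r(G,\sigma)$ is the operator-norm closed $*$-algebra generated by $\Lambda_\sigma(G)$ in $B(\ell^2(G))$. For $x\in C^*_r(G,\sigma)$, $\widehat x=x\delta_e\in\ell^2(G)$, and its Fourier series is $\sum_g\widehat x(g)\Lambda_\sigma(g)$ (convergence meaning convergence of the net of finite partial sums). $L$ proper means $L^{-1}([0,t])$ finite for all $t$. $\mathcal{K}(G)$ = finitely supported functions; $\pi_\lambda(f)=\sum_g f(g)\lambda(g)$. The Haagerup content of a finite nonempty $E\subseteq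 G$ is $c(E)=\sup\{\|\pi_\lambda(f)\|\mid f\in\mathcal{K}(G),\ \mathrm{supp}f\subseteq E,\ \|f\|_2=1\}$. With $B_{r,L}=\{g\mid L(g)\le r\}$: polynomial H-growth w.r.t. $L$ means $c(B_{r,L})\le K(1+r)^p$ for some $K,p>0$ and all $r\ge0$; subexponential H-growth means for every $b>1$ there is $r_0$ with $c(B_{r,L})<b^r$ for $r\ge r_0$. *)

From HB Require Import structures.
From mathcomp Require Import all_boot all_order all_algebra.
From mathcomp Require Import finmap.
From mathcomp Require Import all_classical all_reals all_analysis.
From mathcomp.real_closed Require Import complex.
Set Implicit Arguments. Unset Strict Implicit. Unset Printing Implicit Defensive.
Import Order.TTheory GRing.Theory Num.Theory.
Local Open Scope ring_scope.
Local Open Scope classical_set_scope.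

Record group_laws (G : Type) := GroupLaws {
  gmul : G -> G -> G;
  gone : G;
  ginv : G -> G;
  gmulA : forall x y z, gmul x (gmul y z) = gmul (gmul x y) z;
  gmul1 : forall x, gmul gone x = x;
  gmulV : forall x, gmul (ginv x) x = gone }.

Section TwistedGroupCstar.
Variables (R : realType) (G : countType) (gl : group_laws G).
Local Notation C := (R[i]).
Local Notation gm := (gmul gl).
Local Notation e := (gone gl).
Local Notation gi := (ginv gl).

Definition cabs (z : C) : R := Normc.normc z.

Definition cocycle (sigma : G -> G -> C) : Prop :=
  (forall g h, cabs (sigma g h) = 1) /\
  (forall g h k, sigma g h * sigma (gm g h) k = sigma h k * sigma g (gm h k)) /\
  (forall g, sigma g e = 1 /\ sigma e g = 1).

Definition op := (G -> C) -> (G -> C).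

Definition Lambda (sigma : G -> G -> C) (g : G) : op :=
  fun xi h => sigma g (gm (gi g) h) * xi (gm (gi g) h).

Definition l2norm (xi : G -> C) : \bar R :=
  sqrte (\esum_(g in [set: G]) ((cabs (xi g)) ^+ 2)%:E).

Definition opnorm (T : op) : \bar R :=
  ereal_sup [set l2norm (T xi) | xi in [set xi | (l2norm xi <= 1%:E)%E]].

Definition opsub (T S : op) : op := fun xi h => T xi h - S xi h.

Definition pisum (sigma : G -> G -> C) (s : {fset G}) (c : G -> C) : op :=
  fun xi h => \sum_(g <- s) c g * Lambda sigma g xi h.

(* x belongs to C*_r(G, sigma): operator-norm limit of elements of span Lambda_sigma(G)
   (= the *-algebra generated by Lambda_sigma(G)) *)
Definition in_Cred (sigma : G -> G -> C) (x : op) : Prop :=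
  forall eps : R, 0 < eps ->
    exists (s : {fset G}) (c : G -> C), (opnorm (opsub x (pisum sigma s c)) < eps%:E)%E.

Definition delta_e : G -> C := fun h => if h == e then 1 else 0.
Definition xhat (x : op) : G -> C := x delta_e.

Definition fourier_converges (sigma : G -> G -> C) (x : op) : Prop :=
  forall eps : R, 0 < eps -> exists F0 : {fset G}, forall F : {fset G},
    fsubset F0 F -> (opnorm (opsub x (pisum sigma F (xhat x))) < eps%:E)%E.

Definition trivial_cocycle : G -> G -> C := fun _ _ => 1.

(* Haagerup content of E : sup ||pi_lambda(f)|| over finitely supported f,
   supp f in E, ||f||_2 = 1 *)
Definition hcontent (E : set G) : \bar R :=
  ereal_sup [set y | exists (s : {fset G}) (f : G -> C),
     [set` s] `<=` E /\ (forall g, g \notin s -> f g = 0) /\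
     l2norm f = 1%:E /\ y = opnorm (pisum trivial_cocycle s f)].

Definition lball (L : G -> R) (r : R) : set G := [set g | L g <= r].

Definition proper_length (L : G -> R) : Prop :=
  forall t : R, finite_set (lball L t).

Definition poly_Hgrowth (L : G -> R) : Prop :=
  exists K p : R, 0 < K /\ 0 < p /\
    forall r : R, 0 <= r -> (hcontent (lball L r) <= (K * (1 + r) `^ p)%:E)%E.

Definition subexp_Hgrowth (L : G -> R) : Prop :=
  forall b : R, 1 < b -> exists r0 : R, forall r : R, r0 <= r ->
    (hcontent (lball L r) < (b `^ r)%:E)%E.

End TwistedGroupCstar.

From HB Require Import structures.
From mathcomp Require Import all_boot all_order all_algebra.
From mathcomp Require Import finmap.
From mathcomp Require Import all_classical all_reals all_analysis.
From mathcomp.real_closed Require Import complex.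
From mathcomp Require Import ring lra zify.
Set Implicit Arguments. Unset Strict Implicit. Unset Printing Implicit Defensive.
Import Order.TTheory GRing.Theory Num.Theory.
Local Open Scope ring_scope.
Local Open Scope classical_set_scope.

(* Let a be the Fourier coefficients of x and S_F the partial sum over F.  Given
   xi in the unit ball and a finite test set, approximate x in norm by a finite
   combination P; then |(x - S_F x) xi| is bounded pointwise by a small constant
   plus the convolution (|a| 1_{G \ F}) * |xi|.  Cut G \ F into the shells
   n <= L < n + 1: on the n-th shell the Haagerup content M_n of the ball of
   radius n + 1 bounds the l2 norm of the convolution by M_n times the l2 norm of
   a on the shell, and a weighted Cauchy-Schwarz inequality over the shells gives
     || (|a| 1_{G \ F}) * |xi| ||^2 <= (sum_n M_n^2 / v_n) * sum_{g notin F} |a g|^2 w g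
   whenever v_n <= w on the n-th shell.  The right-hand side is small for F large.
   Polynomial growth makes sum_n M_n^2 / v_n finite for v_n = (n + 1)^(2p + 2) and
   subexponential growth (with b = e^(t/4)) for v_n = e^(t n). *)

Section ComplexModulus.
Variable R : realType.
Local Notation C := (R[i]).

Lemma cabs_ge0 (z : C) : 0 <= cabs z.
Proof. by case: z => a b; apply: sqrtr_ge0. Qed.

Lemma cabsM (z w : C) : cabs (z * w) = cabs z * cabs w.
Proof. exact: Normc.normcM. Qed.

Lemma cabsD (z w : C) : cabs (z + w) <= cabs z + cabs w.
Proof. exact: le_normcD. Qed.

Lemma cabsN (z : C) : cabs (- z) = cabs z.
Proof. exact: normcN. Qed.

Lemma cabs0 : cabs (0 : C) = 0.
Proof. exact: Normc.normc0. Qed.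

Lemma cabs1 : cabs (1 : C) = 1.
Proof. exact: Normc.normc1. Qed.

Lemma cabsR (r : R) : cabs (r%:C)%C = `|r|.
Proof. by rewrite /cabs /= expr0n /= addr0 sqrtr_sqr. Qed.

Lemma cabs_sum (I : Type) (s : seq I) (F : I -> C) :
  cabs (\sum_(i <- s) F i) <= \sum_(i <- s) cabs (F i).
Proof.
elim: s => [|i s IH]; first by rewrite !big_nil cabs0.
by rewrite !big_cons; apply: le_trans (cabsD _ _) _; rewrite lerD2l.
Qed.

End ComplexModulus.

Section RealInequalities.
Variable R : realFieldType.

Lemma mul2_le_amgm (a b l : R) : 0 < l -> 2 * (a * b) <= a ^+ 2 / l + l * b ^+ 2.
Proof.
move=> l0.
have -> : a ^+ 2 / l + l * b ^+ 2 = 2 * (a * b) + l * (b - a / l) ^+ 2.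
  by field; rewrite gt_eqF.
by rewrite lerDl mulr_ge0 ?sqr_ge0 ?ltW.
Qed.

(* Sum [2 u_i t <= u_i^2 / lam_i + lam_i t^2] at [t = S / L]. *)
Lemma sqr_sum_le_weighted (I : Type) (s : seq I) (u lam : I -> R) :
  (forall i, 0 < lam i) ->
  (\sum_(i <- s) u i) ^+ 2 <=
    (\sum_(i <- s) lam i) * \sum_(i <- s) u i ^+ 2 / lam i.
Proof.
move=> lam0; set S := \sum_(i <- s) u i; set L := \sum_(i <- s) lam i.
set Q := \sum_(i <- s) _.
case: s @S @L @Q => [|j s] S L Q.
  by rewrite /S /L !big_nil expr0n mul0r.
have L0 : 0 < L by rewrite /L big_cons ltr_pwDl ?sumr_ge0 // => i _; apply: ltW.
pose t := S / L.
have amgm : 2 * (S * t) <= Q + L * t ^+ 2.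
  rewrite /S /Q /L big_distrl big_distrr /= [_ * t ^+ 2]mulr_suml -big_split /=.
  by apply: ler_sum => i _; apply: mul2_le_amgm.
have -> : S ^+ 2 = L * (S * t) by rewrite /t; field; rewrite gt_eqF.
have Lt : L * t ^+ 2 = S * t by rewrite /t; field; rewrite gt_eqF.
by rewrite ler_pM2l //; lra.
Qed.

Lemma sum_sqr_le_add_sqr (I : Type) (r : seq I) (f u : I -> R) (a : R) :
  (forall i, 0 <= f i <= a + u i) ->
  \sum_(i <- r) f i ^+ 2 <= (a ^+ 2 *+ 2) *+ size r + 2 * \sum_(i <- r) u i ^+ 2.
Proof.
move=> fu; elim: r => [|i r IH]; first by rewrite !big_nil mulr0 addr0.
have fi : f i ^+ 2 <= a ^+ 2 *+ 2 + 2 * u i ^+ 2.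
  have /andP[f0 fa] := fu i.
  apply: le_trans (_ : (a + u i) ^+ 2 <= _).
    by rewrite lerXn2r ?nnegrE // (le_trans f0 fa).
  have := sqr_ge0 (a - u i); rewrite !expr2 mulr2n; lra.
rewrite !big_cons /= mulrSr mulrDr; lra.
Qed.

Lemma tail_budget_le (A eps : R) (n : nat) : 0 <= A -> 0 < eps ->
  ((2 * (eps / (4 * (n%:R + 1)))) ^+ 2 *+ 2) *+ n +
    2 * (A * (eps ^+ 2 / (8 * (A + 1)))) <= 3 / 4 * eps ^+ 2.
Proof.
move=> A0 eps0; have n1_gt0 : 0 < n%:R + 1 :> R by rewrite ltr_wpDl.
have A_tau : 2 * (A * (eps ^+ 2 / (8 * (A + 1)))) <= eps ^+ 2 / 4.
  have -> : 2 * (A * (eps ^+ 2 / (8 * (A + 1)))) = eps ^+ 2 / 4 * (A / (A + 1)).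
    by field; rewrite gt_eqF // ltr_wpDl.
  by rewrite ler_piMr ?divr_ge0 ?sqr_ge0 // ler_pdivrMr ?ltr_wpDl // mul1r lerDl.
have n_eta : ((2 * (eps / (4 * (n%:R + 1)))) ^+ 2 *+ 2) *+ n <= eps ^+ 2 / 2.
  rewrite -[_ *+ n]mulr_natr -[_ *+ 2]mulr_natr.
  have -> : (2 * (eps / (4 * (n%:R + 1)))) ^+ 2 * 2%:R * n%:R =
      eps ^+ 2 / 2 * (n%:R / (n%:R + 1) ^+ 2) by field; rewrite gt_eqF.
  rewrite ler_piMr ?divr_ge0 ?sqr_ge0 // ler_pdivrMr ?exprn_gt0 // mul1r.
  by have : 0 <= n%:R :> R by []; rewrite expr2; nra.
lra.
Qed.

Lemma sum_inv_sqr_le (N : nat) :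
  \sum_(n < N) 1 / (n.+1%:R : R) ^+ 2 <= 2 - 2 / N.+1%:R.
Proof.
elim: N => [|N IH]; first by rewrite big_ord0 divr1 subrr.
rewrite big_ord_recr /=; apply: le_trans (lerD IH (lexx _)) _.
set a : R := N.+1%:R.
have a1 : 1 <= a by rewrite /a ler1n.
have a0 : 0 < a by apply: lt_le_trans a1.
have -> : (N.+2%:R : R) = a + 1 by rewrite /a -natr1.
clearbody a; rewrite -subr_ge0.
have -> : 2 - 2 / (a + 1) - (2 - 2 / a + 1 / a ^+ 2) = (a - 1) / (a ^+ 2 * (a + 1)).
  by field; rewrite !gt_eqF ?addr_gt0.
by rewrite divr_ge0 ?subr_ge0 // mulr_ge0 ?sqr_ge0 // addr_ge0 // ltW.
Qed.

End RealInequalities.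

Section GroupLaws.
Variables (G : Type) (gl : group_laws G).
Local Notation gm := (gmul gl).
Local Notation e := (gone gl).
Local Notation gi := (ginv gl).

Lemma gmulrV x : gm x (gi x) = e.
Proof.
have -> : gm x (gi x) = gm (gm (gi (gi x)) (gi x)) (gm x (gi x)).
  by rewrite gmulV gmul1.
by rewrite -gmulA (gmulA _ (gi x) x) gmulV gmul1 gmulV.
Qed.

Lemma gmulr1 x : gm x e = x.
Proof. by rewrite -(gmulV gl x) gmulA gmulrV gmul1. Qed.

Lemma ginvK x : gi (gi x) = x.
Proof. by rewrite -[LHS]gmulr1 -(gmulV gl x) gmulA gmulV gmul1. Qed.

Lemma ginvM_eq1 k g : gm (gi k) g = e -> k = g.
Proof.
move=> kg; have : gm k (gm (gi k) g) = gm k e by rewrite kg.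
by rewrite gmulA gmulrV gmul1 gmulr1.
Qed.

Lemma ginvM_inj h : injective (fun g => gm (gi g) h).
Proof.
move=> g g' /= eq_gh.
have : gm (gm (gi g) h) (gi h) = gm (gm (gi g') h) (gi h) by rewrite eq_gh.
by rewrite -!gmulA gmulrV !gmulr1 => /(congr1 gi); rewrite !ginvK.
Qed.

End GroupLaws.

Section SquareSummable.
Variables (R : realType) (G : countType).
Local Notation C := (R[i]).

Lemma sum_le_esum (f : G -> R) (r : seq G) : uniq r -> (forall g, 0 <= f g) ->
  ((\sum_(g <- r) f g)%:E <= \esum_(g in [set: G]) (f g)%:E)%E.
Proof.
move=> ur f0; apply: esum_ge; exists [set` r]; first by split; [exact: finite_seq|].
by rewrite -sumEFin (fsbig_seq _ _ ur).
Qed.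

Lemma esum_le_fsum_ub (f : G -> R) (B : R) :
  (forall s : {fset G}, \sum_(g <- s) f g <= B) ->
  (\esum_(g in [set: G]) (f g)%:E <= B%:E)%E.
Proof.
move=> H; apply: ge_ereal_sup => _ [X [finX _] <-].
by rewrite fsbig_finite // sumEFin lee_fin.
Qed.

Lemma esum_fsupp (f : G -> R) (s : {fset G}) :
  (forall g, 0 <= f g) -> (forall g, g \notin s -> f g = 0) ->
  \esum_(g in [set: G]) (f g)%:E = (\sum_(g <- s) f g)%:E.
Proof.
move=> f0 fs; rewrite (eq_esum (b := fun g => if g \in [set` s] then (f g)%:E else 0%E)).
  rewrite -esum_mkcond (esum_fset (finite_fset s)); last by move=> g _; rewrite lee_fin.
  by rewrite fsbig_finite ?finite_fset // set_fsetK sumEFin.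
by move=> g _; case: ifPn => // /negP; rewrite inE /= => /negP /fs ->.
Qed.

Lemma esum_tail_small (f : G -> R) : (forall g, 0 <= f g) ->
  (\esum_(g in [set: G]) (f g)%:E < +oo)%E ->
  forall eps, 0 < eps -> exists F0 : {fset G}, forall F D : {fset G},
    (F0 `<=` F)%fset -> \sum_(g <- (D `\` F)%fset) f g <= eps.
Proof.
move=> f0 fin eps eps0.
set E := esum _ _ in fin.
have E0 : (0 <= E)%E by apply: esum_ge0 => g _; rewrite lee_fin.
have /fineK Er : E \is a fin_num by rewrite ge0_fin_numE.
have : ((fine E - eps)%:E < E)%E by rewrite -Er lte_fin ltrBlDr ltrDl.
case/ereal_sup_gt => _ [X [finX _] <-]; rewrite fsbig_finite // sumEFin lte_fin => XE.
exists (fset_set X) => F D F0F.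
have XF : (fset_set X `<=` F)%fset := F0F.
have : \sum_(g <- (D `\` F)%fset ++ fset_set X) f g <= fine E.
  rewrite -lee_fin Er; apply: sum_le_esum => //.
  rewrite cat_uniq !fset_uniq andbT /=; apply/hasPn => g /(fsubsetP XF) gF.
  by rewrite inE gF.
by rewrite big_cat /=; lra.
Qed.

Lemma l2norm_fsupp (f : G -> C) (s : {fset G}) : (forall g, g \notin s -> f g = 0) ->
  l2norm f = (Num.sqrt (\sum_(g <- s) cabs (f g) ^+ 2))%:E.
Proof.
move=> fs; rewrite /l2norm (@esum_fsupp _ s) // => [g|g /fs ->].
  exact: sqr_ge0.
by rewrite cabs0 expr0n.
Qed.

Lemma l2norm_le1E (xi : G -> C) :
  (l2norm xi <= 1%:E)%E = (\esum_(g in [set: G]) (cabs (xi g) ^+ 2)%:E <= 1%:E)%E.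
Proof.
by rewrite -[RHS](lee_sqrt _ lee01) /= sqrtr1.
Qed.

Lemma l2norm_cabs (xi : G -> C) : l2norm (fun g => (cabs (xi g))%:C%C) = l2norm xi.
Proof.
by congr sqrte; apply: eq_esum => g _; rewrite cabsR ger0_norm ?cabs_ge0.
Qed.

Lemma fsum_sqr_le_opnorm (T : op R G) (xi : G -> C) (M : R) (H : {fset G}) :
  (l2norm xi <= 1%:E)%E -> (opnorm T <= M%:E)%E -> 0 <= M ->
  \sum_(h <- H) cabs (T xi h) ^+ 2 <= M ^+ 2.
Proof.
move=> xi1 TM M0.
have S0 : 0 <= \sum_(h <- H) cabs (T xi h) ^+ 2 by apply: sumr_ge0 => h _; apply: sqr_ge0.
have : (sqrte (\sum_(h <- H) cabs (T xi h) ^+ 2)%:E <= M%:E)%E.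
  apply: le_trans TM; apply: le_trans (ereal_sup_ubound _); last by exists xi.
  rewrite /l2norm lee_sqrt; first by apply: sum_le_esum => [|g]; [exact: fset_uniq|exact: sqr_ge0].
  by apply: esum_ge0 => g _; rewrite lee_fin sqr_ge0.
rewrite /= lee_fin => sM.
by rewrite -(sqr_sqrtr S0) lerXn2r ?nnegrE ?sqrtr_ge0.
Qed.

Lemma cabs_le_opnorm (T : op R G) (xi : G -> C) (M : R) h :
  (l2norm xi <= 1%:E)%E -> (opnorm T <= M%:E)%E -> 0 <= M -> cabs (T xi h) <= M.
Proof.
move=> xi1 TM M0; have := fsum_sqr_le_opnorm [fset h]%fset xi1 TM M0.
by rewrite big_seq_fset1 ler_pXn2r ?nnegrE ?cabs_ge0.
Qed.

Lemma opnorm_lt_of_fsum (T : op R G) (B eps : R) : 0 <= B -> B < eps ^+ 2 -> 0 < eps ->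
  (forall xi : G -> C, (l2norm xi <= 1%:E)%E -> forall H : {fset G},
      \sum_(h <- H) cabs (T xi h) ^+ 2 <= B) ->
  (opnorm T < eps%:E)%E.
Proof.
move=> B0 Beps eps0 TB; apply: (@le_lt_trans _ _ (sqrte B%:E)); last first.
  by rewrite /= lte_fin -(ger0_norm (ltW eps0)) -sqrtr_sqr ltr_sqrt ?exprn_gt0.
apply: ge_ereal_sup => _ [xi xi1 <-].
by rewrite /l2norm lee_sqrt ?lee_fin //; apply: esum_le_fsum_ub; apply: TB.
Qed.

End SquareSummable.

Section Convolution.
Variables (R : realType) (G : countType) (gl : group_laws G).
Local Notation C := (R[i]).
Local Notation gm := (gmul gl).
Local Notation e := (gone gl).
Local Notation gi := (ginv gl).

Definition abs_conv (s : {fset G}) (beta : G -> R) (xi : G -> C) (h : G) : R :=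
  \sum_(g <- s) beta g * cabs (xi (gm (gi g) h)).

Lemma l2norm_delta_e : l2norm (delta_e R gl) = 1%:E.
Proof.
rewrite (@l2norm_fsupp _ _ _ [fset e]%fset) => [|g]; last first.
  by rewrite inE /delta_e => /negPf ->.
by rewrite big_seq_fset1 /delta_e eqxx cabs1 expr1n sqrtr1.
Qed.

Lemma pisum_delta_e (sigma : G -> G -> C) (s : {fset G}) (c : G -> C) g :
  (forall k, sigma k e = 1) ->
  pisum gl sigma s c (delta_e R gl) g = if g \in s then c g else 0.
Proof.
move=> sigma1; rewrite /pisum /Lambda /delta_e.
have delta_k k : (gm (gi k) g == e) = (k == g).
  by apply/eqP/eqP => [|->]; [exact: ginvM_eq1 | exact: gmulV].
under eq_bigr do rewrite delta_k.
case: ifPn => [gs|/negPf gs].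
  rewrite (big_fsetD1 g gs) /= eqxx gmulV sigma1 !mulr1 big1_fset ?addr0 // => k.
  by rewrite !inE => /andP[/negPf -> _]; rewrite !mulr0.
rewrite big1_fset // => k ks _.
by case: eqP => [kg|_]; [rewrite -kg ks in gs | rewrite !mulr0].
Qed.

Lemma pisum_fsubset (sigma : G -> G -> C) (s D : {fset G}) (c : G -> C) xi h :
  (s `<=` D)%fset ->
  pisum gl sigma s c xi h = pisum gl sigma D (fun g => if g \in s then c g else 0) xi h.
Proof.
move=> sD; rewrite /pisum -(big_fset_incl _ sD) => [|g _ /negPf ->]; last by rewrite mul0r.
by apply: eq_big_seq => g gs; rewrite gs.
Qed.

Lemma cabs_Lambda (sigma : G -> G -> C) g xi h :
  (forall g h, cabs (sigma g h) = 1) ->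
  cabs (Lambda gl sigma g xi h) = cabs (xi (gm (gi g) h)).
Proof. by move=> sigma1; rewrite /Lambda cabsM sigma1 mul1r. Qed.

Lemma cabs_pisum_le (sigma : G -> G -> C) (s : {fset G}) (c : G -> C) xi h :
  (forall g h, cabs (sigma g h) = 1) ->
  cabs (pisum gl sigma s c xi h) <= abs_conv s (fun g => cabs (c g)) xi h.
Proof.
move=> sigma1; apply: le_trans (cabs_sum _ _) _.
by rewrite /abs_conv; under eq_bigr do rewrite cabsM cabs_Lambda //.
Qed.

Lemma sum_sqr_translate_le1 (xi : G -> C) (D : {fset G}) h : (l2norm xi <= 1%:E)%E ->
  \sum_(g <- D) cabs (xi (gm (gi g) h)) ^+ 2 <= 1.
Proof.
rewrite l2norm_le1E => xi1; rewrite -lee_fin; apply: le_trans xi1.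
rewrite -(big_map (fun g => gm (gi g) h) predT (fun k => cabs (xi k) ^+ 2)).
apply: sum_le_esum => [|k]; last exact: sqr_ge0.
by rewrite map_inj_uniq ?fset_uniq //; apply: ginvM_inj.
Qed.

Lemma abs_conv_le (beta : G -> R) (D : {fset G}) (xi : G -> C) (eta : R) h :
  0 < eta -> (l2norm xi <= 1%:E)%E -> \sum_(g <- D) beta g ^+ 2 <= eta ^+ 2 ->
  abs_conv D beta xi h <= eta.
Proof.
move=> eta0 xi1 beta_eta.
have amgm : 2 * abs_conv D beta xi h <=
    \sum_(g <- D) (beta g ^+ 2 / eta + eta * cabs (xi (gm (gi g) h)) ^+ 2).
  by rewrite /abs_conv mulr_sumr; apply: ler_sum => g _; apply: mul2_le_amgm.
rewrite big_split /= -mulr_suml -mulr_sumr in amgm.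
have : eta * \sum_(g <- D) cabs (xi (gm (gi g) h)) ^+ 2 <= eta.
  by rewrite ler_piMr ?(ltW eta0) //; apply: sum_sqr_translate_le1.
have : (\sum_(g <- D) beta g ^+ 2) / eta <= eta by rewrite ler_pdivrMr // -expr2.
lra.
Qed.

Lemma abs_conv_ge0 (s : {fset G}) (beta : G -> R) xi h :
  (forall g, 0 <= beta g) -> 0 <= abs_conv s beta xi h.
Proof. by move=> beta0; apply: sumr_ge0 => g _; rewrite mulr_ge0 ?cabs_ge0. Qed.

Lemma pisum_trivial_cabs (s : {fset G}) (beta : G -> R) (xi : G -> C) h :
  pisum gl (@trivial_cocycle R G) s (fun g => (beta g)%:C%C)
    (fun k => (cabs (xi k))%:C%C) h = (abs_conv s beta xi h)%:C%C.
Proof.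
rewrite /pisum /Lambda /trivial_cocycle rmorph_sum; apply: eq_bigr => g _.
by rewrite mul1r -rmorphM.
Qed.

Lemma hcontent_subset (E E' : set G) : E `<=` E' ->
  (hcontent R gl E <= hcontent R gl E')%E.
Proof.
move=> EE'; apply: ereal_sup_le => y [s [f [sE f_supp]]].
by exists s, f; split => //; apply: subset_trans EE'.
Qed.

Lemma opnorm_pisum_le_hcontent (E : set G) (s : {fset G}) (f : G -> C) :
  [set` s] `<=` E -> (forall g, g \notin s -> f g = 0) -> l2norm f = 1%:E ->
  (opnorm (pisum gl (@trivial_cocycle R G) s f) <= hcontent R gl E)%E.
Proof. by move=> sE fs f1; apply: ereal_sup_ubound; exists s, f. Qed.

(* As [beta >= 0], the convolution is [pi_lambda(beta 1_s) |xi|] for the untwisted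
   representation, whose norm is at most the Haagerup content after normalizing
   [beta 1_s] in l2. *)
Lemma sum_sqr_abs_conv_le_hcontent (L : G -> R) (r M : R) (s H : {fset G})
    (beta : G -> R) (xi : G -> C) :
  (forall g, g \in s -> L g <= r) -> (hcontent R gl (lball L r) <= M%:E)%E -> 0 <= M ->
  (forall g, 0 <= beta g) -> (l2norm xi <= 1%:E)%E ->
  \sum_(h <- H) abs_conv s beta xi h ^+ 2 <= M ^+ 2 * \sum_(g <- s) beta g ^+ 2.
Proof.
move=> sL EM M0 beta0 xi1.
have sqr_beta0 g : 0 <= beta g ^+ 2 by apply: sqr_ge0.
have [r2_0|r2_gt0] := eqVneq (\sum_(g <- s) beta g ^+ 2) 0.
  move/eqP: (r2_0); rewrite psumr_eq0 // => /allP beta_s.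
  rewrite r2_0 mulr0 big1 // => h _; rewrite /abs_conv big_seq big1 ?expr0n // => g gs.
  by move/implyP: (beta_s g gs) => /(_ isT); rewrite sqrf_eq0 => /eqP ->; rewrite mul0r.
have {}r2_gt0 : 0 < \sum_(g <- s) beta g ^+ 2 by rewrite lt_def r2_gt0 sumr_ge0.
set k := Num.sqrt (\sum_(g <- s) beta g ^+ 2).
have k_gt0 : 0 < k by rewrite sqrtr_gt0.
pose beta' g := if g \in s then beta g / k else 0.
have conv' h : abs_conv s beta' xi h = abs_conv s beta xi h / k.
  rewrite /abs_conv mulr_suml; apply: eq_big_seq => g gs.
  by rewrite /beta' gs mulrAC.
have l2_beta' : l2norm (fun g => (beta' g)%:C%C) = 1%:E.
  rewrite (@l2norm_fsupp _ _ _ s) => [|g /negPf gs]; last by rewrite /beta' gs.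
  rewrite (eq_big_seq (fun g => beta g ^+ 2 / k ^+ 2)) => [|g gs]; last first.
    by rewrite cabsR /beta' gs real_normK ?num_real // expr_div_n.
  by rewrite -mulr_suml /k sqr_sqrtr ?divff ?gt_eqF ?sqrtr1 // ltW.
have opnorm_le : (opnorm (pisum gl (@trivial_cocycle R G) s (fun g => (beta' g)%:C%C))
    <= M%:E)%E.
  apply: le_trans EM; apply: opnorm_pisum_le_hcontent => // g /negPf gs.
  by rewrite /beta' gs.
have cabs_xi1 : (l2norm (fun g => (cabs (xi g))%:C%C) <= 1%:E)%E by rewrite l2norm_cabs.
have := fsum_sqr_le_opnorm H cabs_xi1 opnorm_le M0.
under eq_bigr do rewrite pisum_trivial_cabs cabsR conv' ger0_norm ?divr_ge0 ?abs_conv_ge0 ?ltW //.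
under eq_bigr do rewrite expr_div_n.
by rewrite -mulr_suml ler_pdivrMr ?exprn_gt0 // /k sqr_sqrtr // ltW.
Qed.

Lemma sum_shells (t : G -> nat) (N : nat) (D : {fset G}) (F : G -> R) :
  (forall g, g \in D -> (t g < N)%N) ->
  \sum_(g <- D) F g = \sum_(n < N) \sum_(g <- [fset g in D | t g == n]%fset) F g.
Proof.
move=> tN; under [RHS]eq_bigr => n _ do rewrite -big_fset_condE big_mkcond /=.
rewrite exchange_big /= big_seq [RHS]big_seq; apply: eq_bigr => g gD.
rewrite (bigD1 (Ordinal (tN g gD))) //= eqxx big1 ?addr0 // => n.
by rewrite -val_eqE /= eq_sym => /negPf ->.
Qed.

Lemma sum_sqr_fourier_err_le (sigma : G -> G -> C) (x : op R G) (s D : {fset G})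
    (c : G -> C) (eta : R) :
  (forall k, sigma k e = 1) -> 0 <= eta ->
  (opnorm (opsub x (pisum gl sigma s c)) <= eta%:E)%E ->
  \sum_(g <- D) cabs (xhat gl x g - if g \in s then c g else 0) ^+ 2 <= eta ^+ 2.
Proof.
move=> sigma_e eta0 x_eta.
have delta1 : (l2norm (delta_e R gl) <= 1%:E)%E by rewrite l2norm_delta_e.
have := fsum_sqr_le_opnorm D delta1 x_eta eta0.
by under eq_bigr do rewrite /opsub pisum_delta_e //.
Qed.

(* Write [x - S_F x = (x - P) - pisum (s `|` F) d + pisum (s `\` F) a] with
   [P = pisum s c] and [d] the Fourier coefficients of [x - P]; the first two terms
   are at most [eta] since [||x - P|| <= eta]. *)
Lemma cabs_fourier_tail_le (sigma : G -> G -> C) (x : op R G) (s F : {fset G})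
    (c : G -> C) (xi : G -> C) (eta : R) h :
  cocycle gl sigma -> 0 < eta -> (l2norm xi <= 1%:E)%E ->
  (opnorm (opsub x (pisum gl sigma s c)) <= eta%:E)%E ->
  cabs (opsub x (pisum gl sigma F (xhat gl x)) xi h) <=
    2 * eta + abs_conv (s `\` F)%fset (fun g => cabs (xhat gl x g)) xi h.
Proof.
move=> [sigma1 [_ sigma_e]] eta0 xi1 x_eta.
set a := xhat gl x; pose D := (s `|` F)%fset.
pose d g := a g - if g \in s then c g else 0.
have decomp : opsub x (pisum gl sigma F a) xi h =
    opsub x (pisum gl sigma s c) xi h - pisum gl sigma D d xi h
    + pisum gl sigma (s `\` F)%fset a xi h.
  have sFD : ((s `\` F) `<=` D)%fset := fsubset_trans (fsubsetDl s F) (fsubsetUl s F).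
  rewrite /opsub (pisum_fsubset sigma c xi h (fsubsetUl s F)).
  rewrite (pisum_fsubset sigma a xi h (fsubsetUr s F)) (pisum_fsubset sigma a xi h sFD) /pisum.
  rewrite -!addrA; congr (_ + _); rewrite -!sumrN -!big_split /=.
  apply: eq_big_seq => g; rewrite /d !inE.
  by case: (g \in F); case: (g \in s) => //= _; ring.
have err_x : cabs (opsub x (pisum gl sigma s c) xi h) <= eta.
  exact: cabs_le_opnorm xi1 x_eta (ltW eta0).
have err_d : cabs (pisum gl sigma D d xi h) <= eta.
  apply: le_trans (cabs_pisum_le _ _ _ _ sigma1) _; apply: abs_conv_le => //.
  by have := sum_sqr_fourier_err_le D (fun k => (sigma_e k).1) (ltW eta0) x_eta.
rewrite decomp; apply: le_trans (cabsD _ _) _; apply: lerD; last exact: cabs_pisum_le.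
by apply: le_trans (cabsD _ _) _; rewrite cabsN mulr_natl mulr2n; apply: lerD.
Qed.

End Convolution.

Section WeightedTail.
Variables (R : realType) (G : countType) (gl : group_laws G).
Variables (L : G -> R) (M v : nat -> R) (A : R) (w : G -> R).
Local Notation C := (R[i]).

(* [Num.truncn (L g) = n] says that [g] lies in the shell [n <= L g < n + 1]. *)
Hypotheses (M_gt0 : forall n, 0 < M n) (v_gt0 : forall n, 0 < v n).
Hypothesis hcontent_le_M : forall n, (hcontent R gl (lball L n.+1%:R) <= (M n)%:E)%E.
Hypothesis sum_Mv_le : forall N, \sum_(n < N) M n ^+ 2 / v n <= A.
Hypothesis v_le_w : forall g, v (Num.truncn (L g)) <= w g.

Lemma sum_sqr_abs_conv_le (D H : {fset G}) (beta : G -> R) (xi : G -> C) :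
  (forall g, 0 <= beta g) -> (l2norm xi <= 1%:E)%E ->
  \sum_(h <- H) abs_conv gl D beta xi h ^+ 2 <= A * \sum_(g <- D) beta g ^+ 2 * w g.
Proof.
move=> beta0 xi1.
pose t g := Num.truncn (L g).
pose N := (\max_(g <- D) t g).+1.
have tN g : g \in D -> (t g < N)%N by move=> gD; rewrite ltnS leq_bigmax_seq.
pose shell n := [fset g in D | t g == n]%fset.
have A0 : 0 <= A by have := sum_Mv_le 0; rewrite big_ord0.
pose lam n := M n ^+ 2 / v n.
have lam_gt0 n : 0 < lam n by rewrite divr_gt0 ?exprn_gt0.
have conv_shells h : abs_conv gl D beta xi h ^+ 2 <=
    A * \sum_(n < N) abs_conv gl (shell n) beta xi h ^+ 2 / lam n.
  rewrite /abs_conv (sum_shells _ tN).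
  apply: le_trans (sqr_sum_le_weighted _ _ (fun n : 'I_N => lam_gt0 n)) _.
  by rewrite ler_wpM2r ?sum_Mv_le // sumr_ge0 // => n _; rewrite divr_ge0 ?sqr_ge0 ?ltW.
have shell_le n : \sum_(h <- H) abs_conv gl (shell n) beta xi h ^+ 2 / lam n <=
    v n * \sum_(g <- shell n) beta g ^+ 2.
  have -> : v n * \sum_(g <- shell n) beta g ^+ 2 =
      (M n ^+ 2 * \sum_(g <- shell n) beta g ^+ 2) / lam n.
    by rewrite /lam; field; rewrite !gt_eqF.
  rewrite -mulr_suml ler_pM2r ?invr_gt0 //.
  apply: sum_sqr_abs_conv_le_hcontent (hcontent_le_M n) _ beta0 xi1 => [g|].
    by rewrite !inE => /andP[_ /eqP <-]; apply/ltW/truncnS_gt.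
  exact/ltW.
apply: (le_trans (ler_sum H (fun h (_ : true) => conv_shells h))).
rewrite -mulr_sumr ler_wpM2l // exchange_big /=.
apply: (le_trans (ler_sum _ (fun (n : 'I_N) (_ : true) => shell_le n))).
rewrite (sum_shells _ tN); apply: ler_sum => n _.
rewrite mulr_sumr !big_seq; apply: ler_sum => g; rewrite !inE => /andP[_ /eqP tg].
by rewrite mulrC ler_wpM2l ?sqr_ge0 // -tg v_le_w.
Qed.

Lemma fourier_converges_of_weighted (sigma : G -> G -> C) (x : op R G) :
  cocycle gl sigma -> in_Cred gl sigma x ->
  (\esum_(g in [set: G]) (cabs (xhat gl x g) ^+ 2 * w g)%:E < +oo)%E ->
  fourier_converges gl sigma x.
Proof.
move=> sigma_cocycle x_Cred x_summable eps eps0.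
set a := xhat gl x.
have A0 : 0 <= A by have := sum_Mv_le 0; rewrite big_ord0.
have w_ge0 g : 0 <= w g by apply: le_trans (ltW (v_gt0 _)) (v_le_w g).
pose tau := eps ^+ 2 / (8 * (A + 1)).
have tau_gt0 : 0 < tau by rewrite divr_gt0 ?exprn_gt0 // mulr_gt0 // ltr_wpDl.
have [F0 tail_le] := esum_tail_small (fun g => mulr_ge0 (sqr_ge0 (cabs (a g))) (w_ge0 g))
  x_summable tau_gt0.
exists F0 => F F0F.
apply: (@opnorm_lt_of_fsum _ _ _ (3 / 4 * eps ^+ 2)) => // [||xi xi1 H].
- by rewrite mulr_ge0 ?sqr_ge0.
- by have := exprn_gt0 2 eps0; lra.
pose n := size H.
pose eta := eps / (4 * (n%:R + 1)).
have eta_gt0 : 0 < eta by rewrite divr_gt0 // mulr_gt0 // ltr_wpDl.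
have [s [c x_eta]] := x_Cred eta eta_gt0.
pose u h := abs_conv gl (s `\` F)%fset (fun g => cabs (a g)) xi h.
have pointwise h : 0 <= cabs (opsub x (pisum gl sigma F a) xi h) <= 2 * eta + u h.
  by rewrite cabs_ge0 (cabs_fourier_tail_le F h sigma_cocycle eta_gt0 xi1 (ltW x_eta)).
have sum_u : \sum_(h <- H) u h ^+ 2 <= A * tau.
  apply: le_trans (sum_sqr_abs_conv_le _ _ (fun g => cabs_ge0 _) xi1) _.
  by rewrite ler_wpM2l //; apply: tail_le.
apply: le_trans (sum_sqr_le_add_sqr H pointwise) _.
by apply: le_trans (tail_budget_le n A0 eps0); rewrite lerD2l ler_pM2l.
Qed.

End WeightedTail.

Section GrowthWeights.
Variable R : realType.

Lemma poly_weight_le (K p : R) (n : nat) : 0 <= K -> 0 <= p ->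
  (K * n.+2%:R `^ p) ^+ 2 / n.+1%:R `^ (2 * p + 2) <=
    K ^+ 2 * (2 `^ p) ^+ 2 * (1 / n.+1%:R ^+ 2).
Proof.
move=> K0 p0; set y : R := n.+1%:R.
have y_gt0 : 0 < y by rewrite ltr0Sn.
have -> : y `^ (2 * p + 2) = (y `^ p) ^+ 2 * y ^+ 2.
  rewrite (_ : 2 * p + 2 = p + (p + 2%:R)); last by ring.
  have yn0 : y != 0 by rewrite gt_eqF.
  rewrite powRD ?yn0 ?implybT // powRD ?yn0 ?implybT // powR_mulrn ?ltW //.
  by rewrite expr2 mulrA.
have yp_gt0 : 0 < y `^ p by apply: powR_gt0.
rewrite ler_pdivrMr ?mulr_gt0 ?exprn_gt0 //.
have -> : K ^+ 2 * (2 `^ p) ^+ 2 * (1 / y ^+ 2) * ((y `^ p) ^+ 2 * y ^+ 2) =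
    (K * (2 `^ p * y `^ p)) ^+ 2 by field; rewrite gt_eqF.
rewrite lerXn2r ?nnegrE ?mulr_ge0 ?powR_ge0 // ler_wpM2l // -powRM ?ler0n //.
by rewrite ge0_ler_powR ?nnegrE ?mulr_ge0 ?ler0n // /y -natrM ler_nat; lia.
Qed.

Lemma expR_weight_le (t r0 : R) (n : nat) : 0 < t ->
  expR (t / 4 * Num.max n.+1%:R r0) ^+ 2 / expR (t * n%:R) <=
    expR (t / 2 * (1 + `|r0|)) * expR (- (t / 2)) ^+ n.
Proof.
move=> t_gt0; rewrite -expRM_natl -expRB -expRM_natr -expRD ler_expR.
have max_le : Num.max n.+1%:R r0 <= n%:R + 1 + `|r0|.
  rewrite ge_max -natr1 lerDl normr_ge0 /=.
  by apply: le_trans (ler_norm r0) _; rewrite lerDr addr_ge0.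
have : t / 2 * Num.max n.+1%:R r0 <= t / 2 * (n%:R + 1 + `|r0|).
  by rewrite ler_pM2l ?divr_gt0.
have n0 : 0 <= n%:R :> R by [].
lra.
Qed.

End GrowthWeights.

Section HgrowthFourier.
Variables (R : realType) (G : countType) (gl : group_laws G) (L : G -> R).
Hypothesis L_ge0 : forall g, 0 <= L g.

Lemma fourier_converges_of_poly_Hgrowth : poly_Hgrowth gl L ->
  exists s : R, 0 < s /\
    forall sigma : G -> G -> R[i], cocycle gl sigma ->
    forall x : op R G, in_Cred gl sigma x ->
      (\esum_(g in [set: G]) (cabs (xhat gl x g) ^+ 2 * (1 + L g) `^ s)%:E < +oo)%E ->
      fourier_converges gl sigma x.
Proof.
case=> K [p [K_gt0 [p_gt0 HK]]].
have s_gt0 : 0 < 2 * p + 2 by rewrite addr_gt0 ?mulr_gt0.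
exists (2 * p + 2); split => // sigma sigma_cocycle x x_Cred.
apply: (@fourier_converges_of_weighted _ _ _ L (fun n => K * n.+2%:R `^ p)
  (fun n => n.+1%:R `^ (2 * p + 2)) (K ^+ 2 * (2 `^ p) ^+ 2 * 2)) => //.
- by move=> n /=; rewrite mulr_gt0.
- by move=> n; have := HK n.+1%:R (ler0n _ _); rewrite nat1r.
- move=> N; have weight_le (n : 'I_N) (_ : true) := poly_weight_le n (ltW K_gt0) (ltW p_gt0).
  apply: (le_trans (ler_sum (index_enum _) weight_le)).
  rewrite -mulr_sumr ler_wpM2l ?mulr_ge0 ?sqr_ge0 ?(ltW K_gt0) //.
  by apply: (le_trans (sum_inv_sqr_le R N)); rewrite lerBlDr lerDl divr_ge0.
- move=> g; rewrite ge0_ler_powR ?(ltW s_gt0) ?nnegrE ?ler0n ?addr_ge0 ?L_ge0 //.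
  by rewrite -nat1r lerD2l truncn_le.
Qed.

Lemma fourier_converges_of_subexp_Hgrowth : subexp_Hgrowth gl L ->
  forall sigma : G -> G -> R[i], cocycle gl sigma ->
  forall x : op R G, in_Cred gl sigma x ->
    (exists t : R, 0 < t /\
       (\esum_(g in [set: G]) (cabs (xhat gl x g) ^+ 2 * expR (t * L g))%:E < +oo)%E) ->
    fourier_converges gl sigma x.
Proof.
move=> Hsubexp sigma sigma_cocycle x x_Cred [t [t_gt0 x_summable]].
have b_gt1 : 1 < expR (t / 4) by rewrite expR_gt1 divr_gt0.
have [r0 hcontent_lt] := Hsubexp _ b_gt1.
pose q := expR (- (t / 2)).
have q_gt0 : 0 < q by apply: expR_gt0.
have q_lt1 : q < 1 by rewrite -expR0 ltr_expR oppr_lt0 divr_gt0.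
apply: (@fourier_converges_of_weighted _ _ _ L (fun n => expR (t / 4 * Num.max n.+1%:R r0))
  (fun n => expR (t * n%:R)) (expR (t / 2 * (1 + `|r0|)) / (1 - q))) x_summable => //.
- by move=> n; apply: expR_gt0.
- by move=> n; apply: expR_gt0.
- move=> n /=; have ball_sub : lball L n.+1%:R `<=` lball L (Num.max n.+1%:R r0).
    by move=> g; rewrite /lball /= => Lg; rewrite le_max Lg.
  apply: (le_trans (hcontent_subset R gl ball_sub)); rewrite expRM.
  apply/ltW/hcontent_lt.
  by rewrite le_max lexx orbT.
- move=> N; have weight_le (n : 'I_N) (_ : true) := expR_weight_le r0 n t_gt0.
  apply: (le_trans (ler_sum (index_enum _) weight_le)).
  have := geometric_le_lim N (ltW (expR_gt0 (t / 2 * (1 + `|r0|)))) q_gt0.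
  by rewrite ger0_norm ?(ltW q_gt0) // seriesEord => /(_ q_lt1).
- by move=> g; rewrite ler_expR ler_pM2l // truncn_le.
Qed.

End HgrowthFourier.

Unset Implicit Arguments.

Theorem theorem3p15 (R : realType) (G : countType) (gl : group_laws G)
    (L : G -> R) (L_ge0 : forall g, 0 <= L g) (L_proper : proper_length L) :
  (poly_Hgrowth gl L ->
     exists s : R, 0 < s /\
       forall sigma : G -> G -> R[i], cocycle gl sigma ->
       forall x : op R G, in_Cred gl sigma x ->
         (\esum_(g in [set: G])
             ((cabs (xhat gl x g)) ^+ 2 * (1 + L g) `^ s)%:E < +oo)%E ->
         fourier_converges gl sigma x) /\
  (subexp_Hgrowth gl L ->
     forall sigma : G -> G -> R[i], cocycle gl sigma ->
     forall x : op R G, in_Cred gl sigma x ->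
       (exists t : R, 0 < t /\
          (\esum_(g in [set: G])
             ((cabs (xhat gl x g)) ^+ 2 * expR (t * L g))%:E < +oo)%E) ->
       fourier_converges gl sigma x).
Proof.
split; [exact: fourier_converges_of_poly_Hgrowth L_ge0 | exact: fourier_converges_of_subexp_Hgrowth].
Qed.
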